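(* Let $p_1,p_2,p_3,p_4$ be distinct primes with $p_3>p_1p_2$ and $p_4>p_1p_2$. Then the numerical semigroup $S=\langle p_1p_3,\,p_2p_3,\,p_1p_4,\,p_2p_4\rangle$ is a complete intersection but is not free.
   Context: A numerical semigroup is a submonoid $S$ of $(\mathbb N,+)$ with finite complement in $\mathbb N$, with minimal system of generators $g_1,\dots,g_\nu$. $S$ is a complete intersection if the semigroup ring $\Bbbk[[t^S]]$ is a complete intersection, equivalently if a minimal presentation of $S$ (a minimal generating set of the congruence $\ker(\mathbb N^\nu\to S,\ (\lambda_i)\mapsto\sum\lambda_ig_i)$) has cardinality $\nu-1$. For $n\in S$, $\mathrm{Ap}(S,n)=\{s\in S: s-n\notin S\}$. For an ordering $\mathbf n=(n_1,\dots,n_\nu)$ of the minimal generators, $\phi_i=\min\{h\in\mathbb N: hn_i\in\langle n_1,\dots,n_{i-1}\rangle\}-1$ ($i=2,\dots,\nu$). $S$ is free if for some ordering $\mathrm{Ap}(S,n_1)=\{\sum_{i=2}^\nu\lambda_in_i: 0\le\lambda_i\le\phi_i\}$. *)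

From mathcomp Require Import all_boot.
Set Implicit Arguments. Unset Strict Implicit. Unset Printing Implicit Defensive.

Definition in_sg (g : seq nat) (x : nat) : Prop :=
  exists a : nat -> nat, x = \sum_(i < size g) a i * nth 0 g i.

Definition sg_of (g : seq nat) : nat -> Prop := in_sg g.

Definition minimal_gens (S : nat -> Prop) (g : seq nat) : Prop :=
  [/\ uniq g,
      (forall x, S x <-> in_sg g x) &
      (forall i, i < size g -> ~ in_sg (rem (nth 0 g i) g) (nth 0 g i))].

(* Factorizations: elements of N^nu, nu = size g. *)
Definition vec (n : nat) := {ffun 'I_n -> nat}.
Definition vadd n (a b : vec n) : vec n := [ffun i => a i + b i].

Definition fact_eval (g : seq nat) (a : vec (size g)) : nat :=
  \sum_(i < size g) a i * nth 0 g i.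

Definition is_congruence n (R : vec n -> vec n -> Prop) : Prop :=
  [/\ (forall a, R a a), (forall a b, R a b -> R b a),
      (forall a b c, R a b -> R b c -> R a c) &
      (forall a b c, R a b -> R (vadd a c) (vadd b c))].

Definition gen_cong n (rho : seq (vec n * vec n)) (a b : vec n) : Prop :=
  forall R, is_congruence R -> (forall p, p \in rho -> R p.1 p.2) -> R a b.

Definition is_presentation (g : seq nat) (rho : seq (vec (size g) * vec (size g)))
  : Prop :=
  forall a b, gen_cong rho a b <-> fact_eval a = fact_eval b.

Arguments is_presentation : clear implicits.

Definition is_minimal_presentation (g : seq nat)
  (rho : seq (vec (size g) * vec (size g))) : Prop :=
  is_presentation g rho /\
  forall rho', {subset rho' <= rho} -> (exists2 p, p \in rho & p \notin rho') ->
    ~ is_presentation g rho'.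

Arguments is_minimal_presentation : clear implicits.

Definition complete_intersection (S : nat -> Prop) : Prop :=
  exists g, minimal_gens S g /\
    exists rho, [/\ uniq rho, is_minimal_presentation g rho & size rho = (size g).-1].

(* Apery set Ap(S,n) = {s in S : s - n notin S} (s - n taken in Z). *)
Definition Apery (S : nat -> Prop) (n s : nat) : Prop :=
  S s /\ ~ (n <= s /\ S (s - n)).

(* h is the least positive integer with h * g_i in <g_1,...,g_{i-1}>
   (0-based index: <nth 0 g 0, ..., nth 0 g (i-1)>). *)
Definition least_mult (g : seq nat) (i h : nat) : Prop :=
  [/\ 0 < h, in_sg (take i g) (h * nth 0 g i) &
      forall h', 0 < h' -> in_sg (take i g) (h' * nth 0 g i) -> h <= h'].

(* S is free: for some ordering n_1,...,n_nu of the minimal generators,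
   Ap(S,n_1) = { sum_{i>=2} l_i n_i : 0 <= l_i <= phi_i },
   with phi_i = min{h >= 1 : h n_i in <n_1..n_{i-1}>} - 1. *)
Definition free (S : nat -> Prop) : Prop :=
  exists g, minimal_gens S g /\ 0 < size g /\
    exists phi : nat -> nat,
      (forall i, 0 < i < size g -> least_mult g i (phi i).+1) /\
      (forall s, Apery S (nth 0 g 0) s <->
         exists l : nat -> nat,
           (forall i, 0 < i < size g -> l i <= phi i) /\
           s = \sum_(1 <= i < size g) l i * nth 0 g i).

From mathcomp Require Import all_boot zify.
Set Implicit Arguments. Unset Strict Implicit. Unset Printing Implicit Defensive.

(* The four products form a minimal system of generators (none
     is a combination of the others, by a divisibility and size argument), and
     a minimal system of generators is unique up to order, since its elements
     are exactly the atoms of S.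
   - Complete intersection.  By Sylvester's bound, p4 = u1 p1 + u2 p2 and
     p3 = v1 p1 + v2 p2.  S is glued from p3 <p1, p2> and p4 <p1, p2>: the
     binomial relations p2 e0 ~ p1 e1, p2 e2 ~ p1 e3 and the gluing relation
     u1 e0 + u2 e1 ~ v1 e2 + v2 e3 generate the kernel congruence of N^4 -> S.
     Each of them is the only one violated by a suitable additive functional,
     so none can be dropped: the presentation is minimal, of size 3 = 4 - 1.
   - Not free.  For an ordering n1, ..., n4 with gcd(n1, n2, n3) = 1, the
     bounds phi_2 + 1 >= n1 / gcd(n1, n2) and phi_3 + 1 >= gcd(n1, n2) put
     into the candidate Apery set an element l2 n2 + l3 n3 congruent to n4
     modulo n1; both being in Ap(S, n1) they coincide, contradicting
     minimality.  Any three of our generators are coprime, so no ordering works. *)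

Lemma in_sg_nil y : in_sg [::] y <-> y = 0.
Proof. by split => [[a ->]|->]; [rewrite big_ord0 | exists (fun _ => 0); rewrite big_ord0]. Qed.

Lemma in_sg_cons v g y :
  in_sg (v :: g) y <-> exists k w, in_sg g w /\ y = k * v + w.
Proof.
split => [[a ->]|[k [w [[a ->] ->]]]].
  rewrite big_ord_recl /=; exists (a 0), (\sum_(i < size g) a (bump 0 i) * nth 0 g i).
  by split => //; exists (fun i => a i.+1).
by exists (fun i => if i is i'.+1 then a i' else k); rewrite big_ord_recl.
Qed.

Lemma in_sg0 g : in_sg g 0.
Proof. by exists (fun _ => 0); rewrite big1 // => i _; rewrite mul0n. Qed.

Lemma in_sgD g x y : in_sg g x -> in_sg g y -> in_sg g (x + y).
Proof.
move=> [a ->] [b ->]; exists (fun i => a i + b i).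
by rewrite -big_split /=; apply: eq_bigr => i _; rewrite mulnDl.
Qed.

Lemma in_sgM g k x : in_sg g x -> in_sg g (k * x).
Proof.
move=> [a ->]; exists (fun i => k * a i).
by rewrite big_distrr /=; apply: eq_bigr => i _; rewrite mulnA.
Qed.

Lemma in_sg_mem g v : v \in g -> in_sg g v.
Proof.
elim: g => // x g IH; rewrite inE => /orP[/eqP->|/IH H]; apply/in_sg_cons.
  by exists 1, 0; split; [apply: in_sg0 | rewrite mul1n addn0].
by exists 0, v.
Qed.

Lemma in_sg_sub g g' y :
  (forall v, v \in g -> in_sg g' v) -> in_sg g y -> in_sg g' y.
Proof.
elim: g y => [|x g IH] y H; first by move/in_sg_nil->; apply: in_sg0.
move/in_sg_cons=> [k [w [Hw ->]]]; apply: in_sgD.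
  by apply/in_sgM/H; rewrite inE eqxx.
by apply: IH => // v Hv; apply: H; rewrite inE Hv orbT.
Qed.

Lemma in_sg1 a y : in_sg [:: a] y <-> exists k, y = k * a.
Proof.
rewrite in_sg_cons; split => [[k [w [/in_sg_nil -> ->]]]|[k ->]].
  by exists k; rewrite addn0.
by exists k, 0; rewrite addn0; split => //; apply/in_sg_nil.
Qed.

Lemma in_sg2 a b y : in_sg [:: a; b] y <-> exists k1 k2, y = k1 * a + k2 * b.
Proof.
rewrite in_sg_cons; split => [[k [w [/in_sg1 [k2 ->] ->]]]|[k1 [k2 ->]]].
  by exists k, k2.
by exists k1, (k2 * b); split => //; apply/in_sg1; exists k2.
Qed.

Lemma in_sg3 a b c y :
  in_sg [:: a; b; c] y <-> exists k1 k2 k3, y = k1 * a + k2 * b + k3 * c.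
Proof.
rewrite in_sg_cons; split => [[k [w [/in_sg2 [k2 [k3 ->]] ->]]]|[k1 [k2 [k3 ->]]]].
  by exists k, k2, k3; rewrite addnA.
by exists k1, (k2 * b + k3 * c); split; [apply/in_sg2; exists k2, k3 | rewrite addnA].
Qed.

Lemma minimal_gens_mem S g x :
  minimal_gens S g -> x \in g -> ~ in_sg (rem x g) x.
Proof.
case=> _ _ Hmin xg; have := Hmin (index x g).
by rewrite index_mem nth_index //; apply.
Qed.

Lemma minimal_gens_gt0 S g x : minimal_gens S g -> x \in g -> 0 < x.
Proof.
move=> Mg xg; rewrite lt0n; apply/eqP => x0.
by apply: (minimal_gens_mem Mg xg); rewrite x0; apply: in_sg0.
Qed.

Definition irreducible (S : nat -> Prop) (x : nat) : Prop :=
  forall y z, S y -> S z -> x = y + z -> y = 0 \/ z = 0.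

(* Minimal generators are atoms: a nontrivial decomposition of x would
   express x through the other generators. *)
Lemma minimal_gen_irreducible S g x : minimal_gens S g -> x \in g -> irreducible S x.
Proof.
move=> Mg xg y z Sy Sz E; case: (Mg) => _ HS _.
have P := perm_to_rem xg.
have split_x t : S t -> exists k w, in_sg (rem x g) w /\ t = k * x + w.
  move=> /HS St; apply/in_sg_cons; apply: in_sg_sub St => v Hv.
  by apply: in_sg_mem; rewrite -(perm_mem P).
have [[|k] [w [Hw Ey]]] := split_x y Sy; last by right; nia.
have [[|k'] [w' [Hw' Ez]]] := split_x z Sz; last by left; nia.
case: (minimal_gens_mem Mg xg).
have Ex : x = w + w' by rewrite E Ey Ez !mul0n.
by rewrite {2}Ex; apply: in_sgD.
Qed.

Lemma irreducible_mem (S : nat -> Prop) G x :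
  (forall w, in_sg G w -> S w) -> irreducible S x ->
  0 \notin G -> in_sg G x -> 0 < x -> x \in G.
Proof.
elim: G => [|v G IH] HS Hirr G0 Hx xpos.
  by move/in_sg_nil: Hx => E; rewrite E in xpos.
move/in_sg_cons: Hx => [[|k] [w [Hw E]]].
  rewrite inE; apply/orP; right; apply: IH => //.
  - by move=> u Hu; apply: HS; apply/in_sg_cons; exists 0, u.
  - by apply: contra G0; rewrite inE => ->; rewrite orbT.
  - by rewrite E.
have v0 : 0 < v by rewrite lt0n; apply: contra G0 => /eqP <-; rewrite inE eqxx.
have [v_0|rest0] : v = 0 \/ k * v + w = 0.
- apply: Hirr; last by rewrite E mulSn addnA.
  + by apply/HS/in_sg_mem; rewrite inE eqxx.
  + by apply: HS; apply/in_sg_cons; exists k, w.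
- by rewrite v_0 in v0.
- by rewrite inE E mulSn -addnA rest0 addn0 eqxx.
Qed.

Lemma minimal_gens_perm S g g' : minimal_gens S g -> minimal_gens S g' -> perm_eq g g'.
Proof.
have incl h h' : minimal_gens S h -> minimal_gens S h' -> forall x, x \in h -> x \in h'.
  move=> Mh Mh' x xh; case: (Mh) => _ HS _; case: (Mh') => _ HS' _.
  apply: (irreducible_mem (S := S)) => //.
  - by move=> w /HS'.
  - exact: minimal_gen_irreducible Mh xh.
  - by apply/negP => /(minimal_gens_gt0 Mh').
  - exact/HS'/HS/in_sg_mem.
  - exact: minimal_gens_gt0 Mh xh.
move=> Mg Mg'; apply: uniq_perm; [by case: Mg | by case: Mg' |].
by move=> x; apply/idP/idP; apply: incl.
Qed.

Lemma modsolve m n y : 0 < m -> gcdn m n %| y ->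
  exists2 l, l < m %/ gcdn m n & l * n = y %[mod m].
Proof.
move=> m0 /dvdnP [q ->].
have mg0 : 0 < m %/ gcdn m n by rewrite divn_gt0 ?gcdn_gt0 ?m0 // dvdn_leq // dvdn_gcdl.
have [l0 Hl0] : exists l0, l0 * n = q * gcdn m n %[mod m].
  have [n0|n0] := posnP n; first by exists 0; rewrite n0 gcdn0 mul0n mod0n modnMl.
  case: (@egcdnP n m n0) => km kn E _.
  by exists (km * q); rewrite mulnAC E mulnDl mulnAC modnMDl mulnC gcdnC.
exists (l0 %% (m %/ gcdn m n)); first by rewrite ltn_mod.
rewrite -Hl0 {2}(divn_eq l0 (m %/ gcdn m n)) mulnDl.
have -> : l0 %/ (m %/ gcdn m n) * (m %/ gcdn m n) * n
   = (l0 %/ (m %/ gcdn m n) * (n %/ gcdn m n)) * m.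
  by rewrite -!mulnA; congr (_ * _); rewrite [LHS]mulnC gcdnC muln_divCA_gcd mulnC.
by rewrite modnMDl.
Qed.

Lemma div_gcd_dvd m n h : 0 < m -> m %| h * n -> m %/ gcdn m n %| h.
Proof.
move=> m0 H; have g0 : 0 < gcdn m n by rewrite gcdn_gt0 m0.
have H2 : m %| h * gcdn m n by rewrite muln_gcdr dvdn_gcd H dvdn_mull.
by rewrite -(dvdn_pmul2r g0) divnK // dvdn_gcdl.
Qed.

Lemma sylvester a b N : coprime a b -> 0 < a -> a.-1 * b <= N ->
  exists x y, N = x * a + y * b.
Proof.
move=> cab a0 le.
have [l Hl E] : exists2 l, l < a %/ gcdn a b & l * b = N %[mod a].
  by apply: modsolve; rewrite // (eqP cab) dvd1n.
rewrite (eqP cab) divn1 in Hl.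
have lN : l * b <= N by apply: leq_trans le; rewrite leq_mul2r -ltnS prednK // Hl orbT.
move/eqP: E; rewrite eq_sym eqn_mod_dvd // => /dvdnP [x Ex].
by exists x, l; rewrite -Ex subnK.
Qed.

Lemma residue_combination n1 n2 n3 t : 0 < n1 -> coprime (gcdn n1 n2) n3 ->
  exists l2 l3, [/\ l2 < n1 %/ gcdn n1 n2, l3 < gcdn n1 n2 &
                    l2 * n2 + l3 * n3 = t %[mod n1]].
Proof.
move=> n1_0 cop; set d := gcdn n1 n2.
have d0 : 0 < d by rewrite gcdn_gt0 n1_0.
have [l3 Hl3 E3] : exists2 l3, l3 < d %/ gcdn d n3 & l3 * n3 = t %[mod d].
  by apply: modsolve; rewrite // (eqP cop) dvd1n.
rewrite (eqP cop) divn1 in Hl3.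
(* y = t - l3 n3 (mod n1), kept nonnegative *)
set y := t + n1.-1 * (l3 * n3).
have Ey : y + l3 * n3 = t + l3 * n3 * n1 by rewrite /y -addnA -mulSnr prednK // mulnC.
have dy : d %| y.
  have : (y + l3 * n3) %% d = (0 + l3 * n3) %% d.
    by rewrite add0n E3 Ey -(divnK (dvdn_gcdl n1 n2)) -/d mulnA addnC modnMDl.
  by move/eqP; rewrite eqn_modDr mod0n.
have [l2 Hl2 E2] := modsolve n1_0 dy.
exists l2, l3; split => //.
by rewrite -modnDml E2 modnDml Ey addnC modnMDl.
Qed.

Definition vscale n k (a : vec n) : vec n := [ffun i => k * a i].

Definition single n (i : 'I_n) m : vec n := [ffun l => (l == i) * m].

(* the additive functional a |-> sum_i a_i w_i; [fact_eval g] is [weight g] *)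
Definition weight n (w : seq nat) (a : vec n) : nat := \sum_(i < n) a i * nth 0 w i.

Lemma weightD n w (a b : vec n) : weight w (vadd a b) = weight w a + weight w b.
Proof. by rewrite /weight -big_split; apply: eq_bigr => i _; rewrite ffunE mulnDl. Qed.

Lemma weight_single n w (i : 'I_n) m : weight w (single i m) = m * nth 0 w i.
Proof.
rewrite /weight (bigD1 i) //= big1 ?addn0 => [|j /negbTE ji].
  by rewrite ffunE eqxx mul1n.
by rewrite ffunE ji.
Qed.

Lemma weight_cong n w : is_congruence (fun a b : vec n => weight w a = weight w b).
Proof.
split=> [a | a b -> | a b c -> -> | a b c E] //.
by rewrite !weightD E.
Qed.

Lemma gen_cong_weight n (rho : seq (vec n * vec n)) w a b :
  (forall p, p \in rho -> weight w p.1 = weight w p.2) ->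
  gen_cong rho a b -> weight w a = weight w b.
Proof. by move=> Hrho H; apply: (H _ (@weight_cong n w)). Qed.

Lemma cong_scale n (R : vec n -> vec n -> Prop) a b : is_congruence R -> R a b ->
  forall k c, R (vadd c (vscale k a)) (vadd c (vscale k b)).
Proof.
case=> Hr _ Ht Hadd Rab; elim=> [|k IH] c.
  have vadd0 v : vadd c (vscale 0 v) = c by apply/ffunP => i; rewrite !ffunE addn0.
  by rewrite !vadd0; apply: Hr.
have E1 : vadd c (vscale k.+1 a) = vadd (vadd c a) (vscale k a).
  by apply/ffunP => i; rewrite !ffunE mulSn; lia.
have E2 : vadd (vadd c a) (vscale k b) = vadd a (vadd c (vscale k b)).
  by apply/ffunP => i; rewrite !ffunE; lia.
have E3 : vadd b (vadd c (vscale k b)) = vadd c (vscale k.+1 b).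
  by apply/ffunP => i; rewrite !ffunE mulSn; lia.
rewrite E1 -E3; apply: Ht (IH _) _; rewrite E2; exact: Hadd.
Qed.

Lemma cong_binomial n (R : vec n -> vec n -> Prop) (i j : 'I_n) P1 P2 :
  is_congruence R -> coprime P1 P2 -> 0 < P2 -> R (single i P2) (single j P1) ->
  forall c x y x' y', P1 * x + P2 * y = P1 * x' + P2 * y' ->
  R (vadd c (vadd (single i x) (single j y))) (vadd c (vadd (single i x') (single j y'))).
Proof.
move=> HR cop P2_0 Rij c.
have [_ Hs _ _] := HR.
suff le_case x y x' y' : x <= x' -> P1 * x + P2 * y = P1 * x' + P2 * y' ->
    R (vadd c (vadd (single i x) (single j y))) (vadd c (vadd (single i x') (single j y'))).
  move=> x y x' y' E; have [le|/ltnW lt] := leqP x x'; first exact: le_case.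
  by apply/Hs/le_case.
move=> le E.
have /dvdnP [k Ek] : P2 %| x' - x.
  rewrite coprime_sym in cop; rewrite -(Gauss_dvdr _ cop).
  rewrite -(dvdn_addl _ (dvdn_mulr y' (dvdnn P2))).
  have -> : P1 * (x' - x) + P2 * y' = P2 * y by nia.
  exact: dvdn_mulr.
have Ex' : x' = x + k * P2 by lia.
have Ey : y = y' + k * P1.
  by apply/eqP; rewrite -(eqn_pmul2l P2_0); apply/eqP; nia.
set d := vadd c (vadd (single i x) (single j y')).
have -> : vadd c (vadd (single i x) (single j y)) = vadd d (vscale k (single j P1)).
  by apply/ffunP => l; rewrite !ffunE Ey; case: (l == i); case: (l == j); lia.
have -> : vadd c (vadd (single i x') (single j y')) = vadd d (vscale k (single i P2)).
  by apply/ffunP => l; rewrite !ffunE Ex'; case: (l == i); case: (l == j); lia.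
by apply/Hs; apply: (cong_scale HR Rij).
Qed.

Definition respects n (w : seq nat) (p : vec n * vec n) : bool :=
  weight w p.1 == weight w p.2.

Lemma witnessed_minimal_presentation g rho p0 (w : nat -> seq nat) :
  is_presentation g rho ->
  (forall i j, i < size rho -> j < size rho ->
     respects (w i) (nth p0 rho j) = (i != j)) ->
  uniq rho /\ is_minimal_presentation g rho.
Proof.
move=> Hpres Hw; split.
  apply/(uniqP p0) => i j ilt jlt E; apply/eqP.
  rewrite -[i == j]negbK -Hw // -E.
  by move: (Hw i i ilt ilt); rewrite eqxx => ->.
split=> // rho' sub [p prho pnot] Hpres'.
have prel : gen_cong rho' p.1 p.2 by apply/Hpres'/Hpres => R _; apply.
have ilt : index p rho < size rho by rewrite index_mem.
suff : respects (w (index p rho)) p by rewrite -{2}(nth_index p0 prho) Hw // eqxx.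
apply/eqP; apply: gen_cong_weight prel => q qrho'.
have qrho := sub q qrho'.
apply/eqP; change (respects (w (index p rho)) q).
rewrite -(nth_index p0 qrho) Hw ?index_mem //.
apply: contraNneq pnot => Eqpq.
by rewrite -(nth_index p0 prho) Eqpq nth_index.
Qed.

Definition mk4 (x0 x1 x2 x3 : nat) : vec 4 :=
  [ffun i : 'I_4 => nth 0 [:: x0; x1; x2; x3] i].

Definition o0 : 'I_4 := @Ordinal 4 0 isT.
Definition o1 : 'I_4 := @Ordinal 4 1 isT.
Definition o2 : 'I_4 := @Ordinal 4 2 isT.
Definition o3 : 'I_4 := @Ordinal 4 3 isT.

Lemma mk4_eta (x : vec 4) : x = mk4 (x o0) (x o1) (x o2) (x o3).
Proof. by apply/ffunP => -[[|[|[|[|//]]]] H]; rewrite ffunE /=; congr (x _); apply: val_inj. Qed.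

Lemma vadd_mk4 a b c d a' b' c' d' :
  vadd (mk4 a b c d) (mk4 a' b' c' d') = mk4 (a + a') (b + b') (c + c') (d + d').
Proof. by apply/ffunP => -[[|[|[|[|//]]]] ?]; rewrite !ffunE. Qed.

Lemma vscale_mk4 k a b c d : vscale k (mk4 a b c d) = mk4 (k * a) (k * b) (k * c) (k * d).
Proof. by apply/ffunP => -[[|[|[|[|//]]]] ?]; rewrite !ffunE. Qed.

Lemma weight_mk4 A B C D x0 x1 x2 x3 :
  weight [:: A; B; C; D] (mk4 x0 x1 x2 x3) = x0 * A + x1 * B + x2 * C + x3 * D.
Proof. by rewrite /weight !big_ord_recl big_ord0 !ffunE /= addn0 !addnA. Qed.

Lemma mk4_split01 a b c d :
  mk4 a b c d = vadd (mk4 0 0 c d) (vadd (single o0 a) (single o1 b)).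
Proof. by apply/ffunP => -[[|[|[|[|//]]]] ?]; rewrite !ffunE /=; lia. Qed.

Lemma mk4_split23 a b c d :
  mk4 a b c d = vadd (mk4 a b 0 0) (vadd (single o2 c) (single o3 d)).
Proof. by apply/ffunP => -[[|[|[|[|//]]]] ?]; rewrite !ffunE /=; lia. Qed.

(* Gluing: a congruence on N^4 containing the two binomial relations of
   <p1, p2> (on the first and on the last two coordinates) and the relation
   u1 e_0 + u2 e_1 ~ v1 e_2 + v2 e_3 identifying the two copies of
   p3 p4 = p3 (u1 p1 + u2 p2) = p4 (v1 p1 + v2 p2) contains the whole kernel
   of the factorization map of <p1 p3, p2 p3, p1 p4, p2 p4>. *)
Lemma glued_cong (R : vec 4 -> vec 4 -> Prop) p1 p2 p3 p4 u1 u2 v1 v2 :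
  is_congruence R -> coprime p1 p2 -> coprime p3 p4 -> 0 < p2 -> 0 < p4 ->
  p4 = u1 * p1 + u2 * p2 -> p3 = v1 * p1 + v2 * p2 ->
  R (single o0 p2) (single o1 p1) -> R (single o2 p2) (single o3 p1) ->
  R (mk4 u1 u2 0 0) (mk4 0 0 v1 v2) ->
  forall x y, weight [:: p1 * p3; p2 * p3; p1 * p4; p2 * p4] x =
              weight [:: p1 * p3; p2 * p3; p1 * p4; p2 * p4] y -> R x y.
Proof.
move=> HR c12 c34 p2_0 p4_0 E4 E3 R01 R23 Rglue x y.
have [_ Hs Ht _] := HR.
rewrite [x]mk4_eta [y]mk4_eta !weight_mk4.
move: (x o0) (x o1) (x o2) (x o3) (y o0) (y o1) (y o2) (y o3) => {x y}.
suff le_case xa xb xc xd ya yb yc yd : p1 * ya + p2 * yb <= p1 * xa + p2 * xb ->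
    xa * (p1 * p3) + xb * (p2 * p3) + xc * (p1 * p4) + xd * (p2 * p4) =
    ya * (p1 * p3) + yb * (p2 * p3) + yc * (p1 * p4) + yd * (p2 * p4) ->
    R (mk4 xa xb xc xd) (mk4 ya yb yc yd).
  move=> xa xb xc xd ya yb yc yd E.
  have [le|/ltnW lt] := leqP (p1 * ya + p2 * yb) (p1 * xa + p2 * xb); first exact: le_case.
  by apply/Hs/le_case.
move=> le E.
set tx := p1 * xa + p2 * xb in le; set ty := p1 * ya + p2 * yb in le.
have E' : p3 * (tx - ty) + p4 * (p1 * xc + p2 * xd) = p4 * (p1 * yc + p2 * yd).
  by rewrite /tx /ty in le *; nia.
have /dvdnP [k Ek] : p4 %| tx - ty.
  rewrite coprime_sym in c34; rewrite -(Gauss_dvdr _ c34).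
  by rewrite -(dvdn_addl _ (dvdn_mulr (p1 * xc + p2 * xd) (dvdnn p4))) E' dvdn_mulr.
have Etx : tx = ty + k * p4 by lia.
have Esy : p1 * yc + p2 * yd = p1 * xc + p2 * xd + k * p3.
  by apply/eqP; rewrite -(eqn_pmul2l p4_0); apply/eqP; nia.
rewrite /tx /ty in Etx.
(* move k copies of the gluing relation from the first half to the second *)
apply: (Ht _ (mk4 (ya + k * u1) (yb + k * u2) xc xd)).
  rewrite mk4_split01 [mk4 (ya + _) _ _ _]mk4_split01.
  by apply: (cong_binomial HR c12 p2_0 R01); nia.
apply: (Ht _ (mk4 ya yb (xc + k * v1) (xd + k * v2))).
  have -> : mk4 (ya + k * u1) (yb + k * u2) xc xd =
            vadd (mk4 ya yb xc xd) (vscale k (mk4 u1 u2 0 0)).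
    by rewrite vscale_mk4 vadd_mk4 !muln0 !addn0.
  have -> : mk4 ya yb (xc + k * v1) (xd + k * v2) =
            vadd (mk4 ya yb xc xd) (vscale k (mk4 0 0 v1 v2)).
    by rewrite vscale_mk4 vadd_mk4 !muln0 !addn0.
  exact: cong_scale.
rewrite mk4_split23 [mk4 ya yb yc yd]mk4_split23.
by apply: (cong_binomial HR c12 p2_0 R23); nia.
Qed.

Lemma apery_mod_inj (S : nat -> Prop) m s s' :
  (forall k x, S x -> S (x + k * m)) ->
  Apery S m s -> Apery S m s' -> s = s' %[mod m] -> s = s'.
Proof.
move=> Hcl.
wlog le : s s' / s <= s'.
  move=> W A A' E; have [le|/ltnW h] := leqP s s'; first exact: W le A A' E.
  exact/esym/(W s' s h A' A (esym E)).
move=> [Ss _] [_ notS'] E; move: le; rewrite leq_eqVlt => /orP [/eqP //|lt].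
move/eqP: E; rewrite eq_sym (eqn_mod_dvd _ (ltnW lt)) => /dvdnP [[|q] Eq].
  by move: lt; rewrite -subn_gt0 Eq.
case: notS'; split; first by rewrite mulSn in Eq; lia.
have -> : s' - m = s + q * m by rewrite mulSn in Eq; lia.
exact: Hcl.
Qed.

Lemma least_mult_bounds n1 n2 n3 n4 (phi : nat -> nat) :
  0 < n1 -> coprime (gcdn n1 n2) n3 -> ~ in_sg [:: n1; n2; n3] n4 ->
  (forall i, 0 < i < 4 -> least_mult [:: n1; n2; n3; n4] i (phi i).+1) ->
  [/\ n1 %/ gcdn n1 n2 <= (phi 1).+1, gcdn n1 n2 <= (phi 2).+1 & 0 < phi 3].
Proof.
move=> n1_0 cop n4_new Hphi; split.
- case: (Hphi 1 isT) => _ /= /in_sg1 [k Ek] _.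
  by apply/dvdn_leq/div_gcd_dvd; rewrite // Ek dvdn_mull.
- case: (Hphi 2 isT) => _ /= /in_sg2 [k1 [k2 Ek]] _.
  apply/dvdn_leq => //; rewrite -(Gauss_dvdl _ cop) Ek.
  by rewrite dvdn_add // dvdn_mull // ?dvdn_gcdl ?dvdn_gcdr.
- case: (Hphi 3 isT) => _ /= n4_old _; rewrite lt0n; apply/eqP => phi3.
  by apply: n4_new; rewrite phi3 mul1n in n4_old.
Qed.

Lemma sum_tail4 (l : nat -> nat) n1 n2 n3 n4 :
  \sum_(1 <= i < 4) l i * nth 0 [:: n1; n2; n3; n4] i = l 1 * n2 + l 2 * n3 + l 3 * n4.
Proof. by rewrite big_nat_recl // big_nat_recl // big_nat_recl // big_geq // addn0 !addnA. Qed.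

(* If gcd(n1, n2, n3) = 1, the ordering n1, n2, n3, n4 of a minimal system of
   generators does not witness freeness: the candidate Apery set would contain
   both n4 and an element l2 n2 + l3 n3 congruent to it modulo n1, forcing
   n4 into <n2, n3>. *)
Lemma not_free_ordering S n1 n2 n3 n4 (phi : nat -> nat) :
  minimal_gens S [:: n1; n2; n3; n4] -> coprime (gcdn n1 n2) n3 ->
  (forall i, 0 < i < 4 -> least_mult [:: n1; n2; n3; n4] i (phi i).+1) ->
  ~ (forall s, Apery S n1 s <-> exists l : nat -> nat,
       (forall i, 0 < i < 4 -> l i <= phi i) /\
       s = \sum_(1 <= i < 4) l i * nth 0 [:: n1; n2; n3; n4] i).
Proof.
move=> Mg cop Hphi Hap.
have [Ug HS _] := Mg.
have n1_0 : 0 < n1 by apply: (minimal_gens_gt0 Mg); rewrite inE eqxx.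
have n4_new : ~ in_sg [:: n1; n2; n3] n4.
  move=> H; apply: (minimal_gens_mem Mg (x := n4)); first by rewrite !inE eqxx !orbT.
  apply: in_sg_sub H => v Hv; apply: in_sg_mem; rewrite mem_rem_uniq // inE.
  move: Ug Hv; rewrite /= !inE !negb_or.
  move=> /andP [/and3P [_ _ n14] /andP [/andP [_ n24] /andP [n34 _]]].
  by case/or3P => /eqP ->; rewrite ?n14 ?n24 ?n34 eqxx ?orbT.
have [b1 b2 b3] := least_mult_bounds n1_0 cop n4_new Hphi.
have [l2 [l3 [Hl2 Hl3 E]]] := residue_combination n4 n1_0 cop.
have Hcl k x : S x -> S (x + k * n1).
  by move=> /HS Sx; apply/HS/in_sgD/in_sgM/in_sg_mem; rewrite ?inE ?eqxx.
have A4 : Apery S n1 n4.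
  apply/Hap; exists (fun i => (i == 3) : nat).
  by split => [[|[|[|[|]]]] //|]; rewrite sum_tail4 mul1n.
have A23 : Apery S n1 (l2 * n2 + l3 * n3).
  apply/Hap; exists (fun i => if i == 1 then l2 else if i == 2 then l3 else 0).
  split => [[|[|[|[|]]]] //= _|]; last by rewrite sum_tail4 addn0.
  - by rewrite -ltnS (leq_trans Hl2 b1).
  - by rewrite -ltnS (leq_trans Hl3 b2).
apply: n4_new; apply/in_sg3; exists 0, l2, l3.
by rewrite (apery_mod_inj Hcl A23 A4 E).
Qed.

Lemma coprime_primes p q : prime p -> prime q -> p != q -> coprime p q.
Proof. by move=> pp pq ne; rewrite prime_coprime // dvdn_prime2. Qed.

Lemma coprime_neq x y : 1 < x -> coprime x y -> x != y.
Proof. by move=> x_gt1; apply: contraTneq => <-; rewrite /coprime gcdnn neq_ltn x_gt1 orbT. Qed.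

(* P1 P3 is not a combination of P2 P3, P1 P4, P2 P4: otherwise either
   P2 | P1, or P4 (k2 P1 + k3 P2) is a positive multiple of P3 P4 > P1 P3. *)
Lemma not_sum_of_others P1 P2 P3 P4 k1 k2 k3 :
  1 < P2 -> 0 < P3 -> coprime P1 P2 -> coprime P3 P4 -> P1 * P2 < P4 ->
  P1 * P3 <> k1 * (P2 * P3) + k2 * (P1 * P4) + k3 * (P2 * P4).
Proof.
move=> P2_gt1 P3_gt0 c12 c34 lt E.
have E' : P1 * P3 = k1 * (P2 * P3) + P4 * (k2 * P1 + k3 * P2) by rewrite E; nia.
have [w0|w_gt0] := posnP (k2 * P1 + k3 * P2).
  move: E'; rewrite w0 muln0 addn0 mulnA => /eqP; rewrite eqn_pmul2r // => /eqP E1.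
  have : P2 %| gcdn P1 P2 by rewrite dvdn_gcd dvdnn E1 dvdn_mull.
  by rewrite (eqP c12) dvdn1 => /eqP P2_1; rewrite P2_1 in P2_gt1.
have : P3 %| P4 * (k2 * P1 + k3 * P2).
  rewrite -(dvdn_addr _ (dvdn_mull k1 (dvdn_mull P2 (dvdnn P3)))) -E'.
  exact: dvdn_mull.
rewrite Gauss_dvdr // => /(dvdn_leq w_gt0).
nia.
Qed.

(* Three distinct elements of [a; b; c; d] contain a or d, and b or c, so
   they have no common factor when a, d and b, c are coprime. *)
Lemma gcd3_distinct a b c d n1 n2 n3 : coprime a d -> coprime b c ->
  n1 \in [:: a; b; c; d] -> n2 \in [:: a; b; c; d] -> n3 \in [:: a; b; c; d] ->
  uniq [:: n1; n2; n3] -> coprime (gcdn n1 n2) n3.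
Proof.
move=> cad cbc.
have key x y : x \in [:: n1; n2; n3] -> y \in [:: n1; n2; n3] -> coprime x y ->
    coprime (gcdn n1 n2) n3.
  have e_dvd z : z \in [:: n1; n2; n3] -> gcdn (gcdn n1 n2) n3 %| z.
    rewrite !inE => /or3P [] /eqP ->; rewrite ?dvdn_gcdr //.
      by rewrite (dvdn_trans (dvdn_gcdl _ _)) ?dvdn_gcdl.
    by rewrite (dvdn_trans (dvdn_gcdl _ _)) ?dvdn_gcdr.
  by move=> xs ys cxy; rewrite /coprime -dvdn1 -(eqP cxy) dvdn_gcd !e_dvd.
rewrite /= !inE !negb_or => H1 H2 H3 /andP [/andP [n12 n13] /andP [n23 _]].
case/or4P: H1 => /eqP E1; case/or4P: H2 => /eqP E2; case/or4P: H3 => /eqP E3;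
  subst; rewrite ?eqxx // in n12 n13 n23;
  solve [ apply: (key a d) => //; by rewrite !inE eqxx ?orbT
        | apply: (key b c) => //; by rewrite !inE eqxx ?orbT ].
Qed.

Section ProductSemigroup.

Variables p1 p2 p3 p4 : nat.
Hypotheses (pr1 : prime p1) (pr2 : prime p2) (pr3 : prime p3) (pr4 : prime p4).
Hypothesis distinct : uniq [:: p1; p2; p3; p4].
Hypotheses (lt3 : p1 * p2 < p3) (lt4 : p1 * p2 < p4).

Let G := [:: p1 * p3; p2 * p3; p1 * p4; p2 * p4].

Let coprime_pairs : [/\ coprime p1 p2, coprime p3 p4,
                        coprime (p1 * p3) (p2 * p4) & coprime (p2 * p3) (p1 * p4)].
Proof.
move: distinct; rewrite /= !inE !negb_or.
move=> /andP [/and3P [n12 n13 n14] /andP [/andP [n23 n24] /andP [n34 _]]].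
by rewrite !coprimeMl !coprimeMr !coprime_primes // eq_sym.
Qed.

Lemma prod_minimal_gens : minimal_gens (sg_of G) G.
Proof.
have [c12 c34 cad cbc] := coprime_pairs.
have q1 := prime_gt1 pr1; have q2 := prime_gt1 pr2.
have q3 := prime_gt1 pr3.
have p3_0 := prime_gt0 pr3; have p4_0 := prime_gt0 pr4.
have c21 : coprime p2 p1 by rewrite coprime_sym.
have c43 : coprime p4 p3 by rewrite coprime_sym.
have nab : p1 * p3 != p2 * p3 by rewrite eqn_pmul2r // coprime_neq.
have nac : p1 * p3 != p1 * p4 by rewrite eqn_pmul2l ?prime_gt0 // coprime_neq.
have nbd : p2 * p3 != p2 * p4 by rewrite eqn_pmul2l ?prime_gt0 // coprime_neq.
have ncd : p1 * p4 != p2 * p4 by rewrite eqn_pmul2r // coprime_neq.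
have nad : p1 * p3 != p2 * p4 by rewrite coprime_neq // (leq_trans q1) ?leq_pmulr.
have nbc : p2 * p3 != p1 * p4 by rewrite coprime_neq // (leq_trans q2) ?leq_pmulr.
split => //; first by rewrite /= !inE !negb_or nab nac nad nbc nbd ncd.
move=> [|[|[|[|i]]]] // _ /=.
- rewrite eqxx => /in_sg3 [k1 [k2 [k3 E]]].
  exact: (@not_sum_of_others p1 p2 p3 p4 k1 k2 k3).
- rewrite (negbTE nab) eqxx => /in_sg3 [k1 [k2 [k3 E]]].
  apply: (@not_sum_of_others p2 p1 p3 p4 k1 k3 k2); by move=> //; nia.
- rewrite (negbTE nac) (negbTE nbc) eqxx => /in_sg3 [k1 [k2 [k3 E]]].
  apply: (@not_sum_of_others p1 p2 p4 p3 k3 k1 k2); by move=> //; nia.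
- rewrite (negbTE nad) (negbTE nbd) (negbTE ncd) eqxx => /in_sg3 [k1 [k2 [k3 E]]].
  apply: (@not_sum_of_others p2 p1 p4 p3 k3 k2 k1); by move=> //; nia.
Qed.

Lemma prod_complete_intersection : complete_intersection (sg_of G).
Proof.
have [c12 c34 _ _] := coprime_pairs.
have p1_0 := prime_gt0 pr1; have p2_0 := prime_gt0 pr2.
have p4_0 := prime_gt0 pr4.
have [u1 [u2 E4]] : exists u1 u2, p4 = u1 * p1 + u2 * p2.
  by apply: sylvester => //; rewrite (leq_trans _ (ltnW lt4)) // leq_mul2r leq_pred orbT.
have [v1 [v2 E3]] : exists v1 v2, p3 = v1 * p1 + v2 * p2.
  by apply: sylvester => //; rewrite (leq_trans _ (ltnW lt3)) // leq_mul2r leq_pred orbT.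
set r1 := (single o0 p2, single o1 p1).
set r2 := (single o2 p2, single o3 p1).
set r3 := (mk4 u1 u2 0 0, mk4 0 0 v1 v2).
have pres : is_presentation G [:: r1; r2; r3].
  move=> x y; split.
    apply: gen_cong_weight => p; rewrite !inE => /or3P [] /eqP -> /=;
      rewrite ?weight_single ?weight_mk4 /=; nia.
  move=> Exy R HR Hrho.
  apply: (glued_cong HR c12 c34 p2_0 p4_0 E4 E3 (Hrho r1 _) (Hrho r2 _) (Hrho r3 _)) => //;
    by rewrite !inE eqxx ?orbT.
(* each relation is the only one violated by one of these functionals *)
set w := nth [::] [:: [:: p3; 0; u1 * p1; u1 * p2]; [:: v1 * p1; v1 * p2; p4; 0];
                      [:: p1; p2; 0; 0]].
have [Urho Mrho] : uniq [:: r1; r2; r3] /\ is_minimal_presentation G [:: r1; r2; r3].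
  apply: (@witnessed_minimal_presentation G [:: r1; r2; r3] r1 w pres).
  move=> [|[|[|i]]] [|[|[|j]]] //= _ _;
    rewrite /respects /= ?weight_single ?weight_mk4 /=;
    by [apply/eqP; nia | apply/negbTE/eqP; nia].
by exists G; split; [apply: prod_minimal_gens | exists [:: r1; r2; r3]].
Qed.

(* No ordering of the generators witnesses freeness, since any three of them
   have no common factor. *)
Lemma prod_not_free : ~ free (sg_of G).
Proof.
have [_ _ cad cbc] := coprime_pairs.
case=> g [Mg [_ [phi [Hphi Hap]]]].
have P : perm_eq g G := minimal_gens_perm Mg prod_minimal_gens.
have [n1 [n2 [n3 [n4 Eg]]]] : exists n1 n2 n3 n4, g = [:: n1; n2; n3; n4].
  case: g P {Mg Hphi Hap} => [|x1 [|x2 [|x3 [|x4 [|? ?]]]]] /perm_size // _.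
  by exists x1, x2, x3, x4.
subst g; apply: (not_free_ordering Mg _ Hphi Hap).
have [Ug _ _] := Mg.
have inG x : x \in [:: n1; n2; n3; n4] -> x \in G by rewrite (perm_mem P).
apply: (gcd3_distinct cad cbc); rewrite ?inG ?inE ?eqxx ?orbT //.
by move: Ug; rewrite /= !inE !negb_or => /andP [/and3P [-> -> _] /andP [/andP [-> _] _]].
Qed.

End ProductSemigroup.

Theorem mainTheorem9 (p1 p2 p3 p4 : nat) :
  prime p1 -> prime p2 -> prime p3 -> prime p4 ->
  uniq [:: p1; p2; p3; p4] ->
  p1 * p2 < p3 -> p1 * p2 < p4 ->
  let S := sg_of [:: p1 * p3; p2 * p3; p1 * p4; p2 * p4] in
  complete_intersection S /\ ~ free S.
Proof.
move=> pr1 pr2 pr3 pr4 U lt3 lt4 S; split.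
  exact: prod_complete_intersection.
exact: prod_not_free.
Qed.
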